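(* Let $a,b\in\mathbb{B}^2$ with $a\ne b$ and $|a|\ne|b|$. Put $$t=\frac{-(1-|a|^2)+\sqrt{(1-|a|^2)(1-|b|^2)}}{|a|^2-|b|^2},\qquad c=(1-t)a+tb.$$ Then $0<t<1$, $h_{\mathbb{B}^2}(a,c)=h_{\mathbb{B}^2}(c,b)$, and $\rho_{\mathbb{B}^2}(a,c)=\rho_{\mathbb{B}^2}(c,b)$.
   Context: $\mathbb{B}^2$ is the open unit disk in $\mathbb{C}$. The hyperbolic metric is given by $\operatorname{sh}\frac{\rho_{\mathbb{B}^2}(x,y)}{2}=\frac{|x-y|}{\sqrt{(1-|x|^2)(1-|y|^2)}}$. For distinct $x,y\in\mathbb{B}^2$ the Hilbert metric is $h_{\mathbb{B}^2}(x,y)=\log\frac{|u-y||x-v|}{|u-x||y-v|}$, where $u,v$ are the intersection points of the line through $x,y$ with the unit circle, labelled so that $|u-x|<|u-y|$. *)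

From Stdlib Require Import Reals.
From Coquelicot Require Import Coquelicot.
Open Scope R_scope.

Definition in_disk (x : C) : Prop := Cmod x < 1.

Definition rho_B2 (x y : C) : R :=
  2 * arcsinh (Cmod (Cminus x y) / sqrt ((1 - Cmod x ^ 2) * (1 - Cmod y ^ 2))).

(* The line through x, y is s |-> x + s (y - x).  It meets the
   unit circle where |x + s(y-x)|^2 = 1, i.e. A s^2 + 2 B s + K = 0 with
   A = |y-x|^2, B = <x, y-x>, K = |x|^2 - 1 (< 0 in the disk).  The two roots
   satisfy s_minus < 0 < 1 < s_plus; u (the endpoint with |u-x| < |u-y|)
   corresponds to s_minus and v to s_plus. *)
Definition dotC (p q : C) : R := fst p * fst q + snd p * snd q.

Definition hil_A (x y : C) : R := Cmod (Cminus y x) ^ 2.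
Definition hil_B (x y : C) : R := dotC x (Cminus y x).
Definition hil_K (x y : C) : R := Cmod x ^ 2 - 1.

Definition hil_sminus (x y : C) : R :=
  (- hil_B x y - sqrt (hil_B x y ^ 2 - hil_A x y * hil_K x y)) / hil_A x y.
Definition hil_splus (x y : C) : R :=
  (- hil_B x y + sqrt (hil_B x y ^ 2 - hil_A x y * hil_K x y)) / hil_A x y.

Definition hil_u (x y : C) : C := Cplus x (Cmult (RtoC (hil_sminus x y)) (Cminus y x)).
Definition hil_v (x y : C) : C := Cplus x (Cmult (RtoC (hil_splus x y)) (Cminus y x)).

Definition hilbert_B2 (x y : C) : R :=
  let u := hil_u x y in
  let v := hil_v x y in
  ln ((Cmod (Cminus u y) * Cmod (Cminus x v)) / (Cmod (Cminus u x) * Cmod (Cminus y v))).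

From Stdlib Require Import Reals Lra.
From Coquelicot Require Import Coquelicot.
Open Scope R_scope.

(* Parametrize the chord through a and b by s |-> a + s (b - a).  It leaves the
   disk at the roots p < 0 < 1 < q of Q(s) = |a + s (b - a)|^2 - 1
   = A (s - p) (s - q), and on it both metrics are explicit: the Hilbert
   distance between parameters r < s is the log of the cross ratio
   (s - p)(q - r) / ((r - p)(q - s)), and sh (rho / 2) is (s - r) |b - a|
   divided by sqrt (-Q(r)) sqrt (-Q(s)).  With sa = sqrt (-Q(0)) and
   sb = sqrt (-Q(1)) the given t equals sa / (sa + sb), so t / sa = (1 - t) / sb
   balances rho, and the two cross ratios agree because sa^2 = - A p q and
   sb^2 = A (1 - p)(q - 1). *)

Lemma ratio_in_unit (x y : R) : 0 < x -> 0 < y -> 0 < x / (x + y) < 1.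
Proof.
  intros Hx Hy. split; [apply Rdiv_lt_0_compat; lra |].
  apply Rmult_lt_reg_r with (x + y); [lra |]. field_simplify; lra.
Qed.

Lemma sqrt_ratio_param (u v : R) : 0 < u -> 0 < v -> u <> v ->
  (- u + sqrt (u * v)) / (v - u) = sqrt u / (sqrt u + sqrt v).
Proof.
  intros Hu Hv Huv.
  pose proof (sqrt_lt_R0 u Hu). pose proof (sqrt_lt_R0 v Hv).
  rewrite sqrt_mult by lra.
  pose proof (pow2_sqrt u) as Eu. pose proof (pow2_sqrt v) as Ev.
  assert (sqrt u <> sqrt v) by (intro E; apply Huv; rewrite <- Eu, <- Ev, E; lra).
  replace (- u + sqrt u * sqrt v) with (sqrt u * (sqrt v - sqrt u)) by nra.
  replace (v - u) with ((sqrt v - sqrt u) * (sqrt u + sqrt v)) by nra.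
  field. lra.
Qed.

Lemma chord_cross_ratio_balance (A p q sa sb : R) : p < 0 -> 1 < q ->
  0 < sa -> 0 < sb -> sa ^ 2 = - (A * p * q) -> sb ^ 2 = A * (1 - p) * (q - 1) ->
  let t := sa / (sa + sb) in
  (t - p) * q / (- p * (q - t)) = (1 - p) * (q - t) / ((t - p) * (q - 1)).
Proof.
  intros Hp Hq Ha Hb Hsa Hsb t.
  pose proof (ratio_in_unit sa sb Ha Hb) as Ht. fold t in Ht.
  assert (Hcross : (t - p) ^ 2 * q * (q - 1) = (q - t) ^ 2 * (- p) * (1 - p)).
  { (* The sa * sb cross terms cancel, leaving a combination of the two hypotheses. *)
    assert (E : (sa + sb) ^ 2 * ((t - p) ^ 2 * q * (q - 1) - (q - t) ^ 2 * (- p) * (1 - p))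
                = (1 - p) * (q - 1) * (q - p) * (sa ^ 2 + A * p * q)
                  + p * q * (q - p) * (sb ^ 2 - A * (1 - p) * (q - 1)))
      by (unfold t; field; lra).
    rewrite Hsa, Hsb, Rplus_opp_l, Rminus_diag, !Rmult_0_r, Rplus_0_r in E.
    apply Rmult_integral in E as [E | E]; [| lra].
    pose proof (pow_lt (sa + sb) 2 ltac:(lra)). lra. }
  field_simplify_eq; [nra | repeat split; lra].
Qed.

Lemma Cmod_sq (z : C) : Cmod z ^ 2 = fst z ^ 2 + snd z ^ 2.
Proof. unfold Cmod. rewrite pow2_sqrt; [reflexivity | nra]. Qed.

Lemma in_disk_defect_pos (z : C) : in_disk z -> 0 < 1 - Cmod z ^ 2.
Proof. unfold in_disk. intro Hz. pose proof (Cmod_ge_0 z). nra. Qed.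

Lemma hil_A_pos (a b : C) : a <> b -> 0 < hil_A a b.
Proof.
  intro Hab. unfold hil_A.
  assert (Cmod (Cminus b a) <> 0).
  { intro E. apply Cmod_eq_0 in E. apply Hab. destruct a, b.
    unfold Cminus, Cplus, Copp in E. injection E; intros. f_equal; lra. }
  pose proof (Cmod_ge_0 (Cminus b a)). nra.
Qed.

Definition lerp (a b : C) (s : R) : C := Cplus a (Cmult (RtoC s) (Cminus b a)).

Lemma lerp_0 (a b : C) : lerp a b 0 = a.
Proof.
  destruct a, b; unfold lerp, Cminus, Cplus, Cmult, Copp, RtoC; simpl.
  apply injective_projections; simpl; ring.
Qed.

Lemma lerp_1 (a b : C) : lerp a b 1 = b.
Proof.
  destruct a, b; unfold lerp, Cminus, Cplus, Cmult, Copp, RtoC; simpl.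
  apply injective_projections; simpl; ring.
Qed.

Lemma lerp_convex (a b : C) (t : R) :
  Cplus (Cmult (RtoC (1 - t)) a) (Cmult (RtoC t) b) = lerp a b t.
Proof.
  destruct a, b; unfold lerp, Cminus, Cplus, Cmult, Copp, RtoC; simpl.
  apply injective_projections; simpl; ring.
Qed.

Lemma Cminus_lerp (a b : C) (r s : R) :
  Cminus (lerp a b r) (lerp a b s) = Cmult (RtoC (r - s)) (Cminus b a).
Proof.
  destruct a, b; unfold lerp, Cminus, Cplus, Cmult, Copp, RtoC; simpl.
  apply injective_projections; simpl; ring.
Qed.

Lemma Cmod_Cminus_lerp (a b : C) (r s : R) :
  Cmod (Cminus (lerp a b r) (lerp a b s)) = Rabs (r - s) * Cmod (Cminus b a).
Proof. now rewrite Cminus_lerp, Cmod_mult, Cmod_R. Qed.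

Lemma lerp_inj (a b : C) (r s : R) : a <> b -> lerp a b r = lerp a b s -> r = s.
Proof.
  intros Hab E. pose proof (Cmod_Cminus_lerp a b r s) as H.
  rewrite E in H. unfold Cminus in H at 1. rewrite Cplus_opp_r, Cmod_0 in H.
  pose proof (hil_A_pos a b Hab) as HA. unfold hil_A in HA.
  symmetry in H. apply Rmult_integral in H as [H | H].
  - apply Rabs_eq_0 in H. lra.
  - rewrite H in HA. lra.
Qed.

Lemma Cmod_lerp_sq (a b : C) (s : R) :
  Cmod (lerp a b s) ^ 2 = Cmod a ^ 2 + 2 * s * hil_B a b + s ^ 2 * hil_A a b.
Proof.
  unfold hil_A, hil_B, dotC. rewrite !Cmod_sq.
  destruct a, b; unfold lerp, Cminus, Cplus, Cmult, Copp, RtoC; simpl. ring.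
Qed.

Lemma hil_A_lerp (a b : C) (r s : R) :
  hil_A (lerp a b r) (lerp a b s) = (s - r) ^ 2 * hil_A a b.
Proof. unfold hil_A. now rewrite Cmod_Cminus_lerp, Rpow_mult_distr, pow2_abs. Qed.

Lemma hil_B_lerp (a b : C) (r s : R) :
  hil_B (lerp a b r) (lerp a b s) = (s - r) * (hil_B a b + r * hil_A a b).
Proof.
  unfold hil_B, hil_A, dotC. rewrite Cminus_lerp, Cmod_sq.
  destruct a, b; unfold lerp, Cminus, Cplus, Cmult, Copp, RtoC; simpl. ring.
Qed.

Lemma hil_K_lerp (a b : C) (r s : R) :
  hil_K (lerp a b r) (lerp a b s) = hil_K a b + 2 * r * hil_B a b + r ^ 2 * hil_A a b.
Proof. unfold hil_K at 1. rewrite Cmod_lerp_sq. unfold hil_K. ring. Qed.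

Lemma hil_disc_lerp (a b : C) (r s : R) : r < s ->
  let x := lerp a b r in let y := lerp a b s in
  sqrt (hil_B x y ^ 2 - hil_A x y * hil_K x y)
  = (s - r) * sqrt (hil_B a b ^ 2 - hil_A a b * hil_K a b).
Proof.
  intros Hrs x y. unfold x, y. rewrite hil_A_lerp, hil_B_lerp, hil_K_lerp.
  replace (_ - _) with ((s - r) ^ 2 * (hil_B a b ^ 2 - hil_A a b * hil_K a b)) by ring.
  rewrite sqrt_mult_alt, sqrt_pow2; lra || nra.
Qed.

Lemma hil_sminus_lerp (a b : C) (r s : R) : a <> b -> r < s ->
  hil_sminus (lerp a b r) (lerp a b s) = (hil_sminus a b - r) / (s - r).
Proof.
  intros Hab Hrs. pose proof (hil_A_pos a b Hab).
  unfold hil_sminus at 1. rewrite (hil_disc_lerp a b r s Hrs), hil_A_lerp, hil_B_lerp.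
  unfold hil_sminus. field; lra.
Qed.

Lemma hil_splus_lerp (a b : C) (r s : R) : a <> b -> r < s ->
  hil_splus (lerp a b r) (lerp a b s) = (hil_splus a b - r) / (s - r).
Proof.
  intros Hab Hrs. pose proof (hil_A_pos a b Hab).
  unfold hil_splus at 1. rewrite (hil_disc_lerp a b r s Hrs), hil_A_lerp, hil_B_lerp.
  unfold hil_splus. field; lra.
Qed.

Lemma hil_sminus_le_splus (a b : C) : a <> b -> hil_sminus a b <= hil_splus a b.
Proof.
  intro Hab. pose proof (hil_A_pos a b Hab).
  pose proof (sqrt_pos (hil_B a b ^ 2 - hil_A a b * hil_K a b)).
  unfold hil_sminus, hil_splus. apply Rmult_le_compat_r; [apply Rlt_le, Rinv_0_lt_compat |]; lra.
Qed.

Lemma Cmod_lerp_sq_factor (a b : C) (s : R) : in_disk a -> a <> b ->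
  Cmod (lerp a b s) ^ 2 - 1
  = hil_A a b * (s - hil_sminus a b) * (s - hil_splus a b).
Proof.
  intros Ha Hab. pose proof (hil_A_pos a b Hab) as HA.
  assert (HK : hil_K a b < 0).
  { unfold in_disk in Ha. pose proof (Cmod_ge_0 a). unfold hil_K. nra. }
  assert (HD : sqrt (hil_B a b ^ 2 - hil_A a b * hil_K a b) ^ 2
               = hil_B a b ^ 2 - hil_A a b * hil_K a b) by (apply pow2_sqrt; nra).
  rewrite Cmod_lerp_sq. unfold hil_sminus, hil_splus.
  set (D := sqrt _) in *. unfold hil_K in *. field_simplify; [rewrite HD; field |]; lra.
Qed.

Lemma in_disk_lerp (a b : C) (s : R) : in_disk a -> a <> b ->
  in_disk (lerp a b s) <-> hil_sminus a b < s < hil_splus a b.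
Proof.
  intros Ha Hab. pose proof (Cmod_lerp_sq_factor a b s Ha Hab) as Hf.
  pose proof (hil_A_pos a b Hab). pose proof (hil_sminus_le_splus a b Hab).
  pose proof (Cmod_ge_0 (lerp a b s)). unfold in_disk. split.
  - intro Hs. assert (Hneg : (s - hil_sminus a b) * (s - hil_splus a b) < 0) by nra.
    split; apply Rnot_le_lt; intro; nra.
  - intros Hs. assert (Hneg : (s - hil_sminus a b) * (s - hil_splus a b) < 0) by nra.
    assert (Cmod (lerp a b s) ^ 2 < 1) by nra. nra.
Qed.

Lemma hilbert_B2_params (x y : C) : x <> y ->
  let sm := hil_sminus x y in let sp := hil_splus x y in
  hilbert_B2 x y = ln (Rabs (sm - 1) * Rabs sp / (Rabs sm * Rabs (sp - 1))).
Proof.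
  intros Hxy sm sp. unfold hilbert_B2.
  change (hil_u x y) with (lerp x y sm). change (hil_v x y) with (lerp x y sp).
  pose proof (Cmod_Cminus_lerp x y sm 1) as Huy.
  pose proof (Cmod_Cminus_lerp x y 0 sp) as Hxv.
  pose proof (Cmod_Cminus_lerp x y sm 0) as Hux.
  pose proof (Cmod_Cminus_lerp x y 1 sp) as Hyv.
  rewrite lerp_1 in Huy, Hyv. rewrite lerp_0 in Hxv, Hux.
  rewrite Rminus_0_l, Rabs_Ropp in Hxv. rewrite Rminus_0_r in Hux.
  rewrite Rabs_minus_sym in Hyv.
  rewrite Huy, Hxv, Hux, Hyv. set (m := Cmod (Cminus y x)).
  assert (Hm : m * m <> 0).
  { pose proof (hil_A_pos x y Hxy) as HA. unfold hil_A in HA. fold m in HA. nra. }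
  (* [Rinv_mult] holds unconditionally (/ 0 = 0), so no root needs to be nonzero. *)
  f_equal. unfold Rdiv. rewrite !Rinv_mult.
  transitivity (Rabs (sm - 1) * Rabs sp * (/ Rabs sm * / Rabs (sp - 1)) * (m * m * / (m * m))).
  - rewrite Rinv_mult. ring.
  - rewrite Rinv_r by exact Hm. ring.
Qed.

Lemma hilbert_B2_lerp (a b : C) (r s : R) : a <> b ->
  let p := hil_sminus a b in let q := hil_splus a b in
  p < r -> r < s -> s < q ->
  hilbert_B2 (lerp a b r) (lerp a b s) = ln ((s - p) * (q - r) / ((r - p) * (q - s))).
Proof.
  intros Hab p q Hpr Hrs Hsq.
  assert (Hxy : lerp a b r <> lerp a b s) by (intro E; apply (lerp_inj a b r s Hab) in E; lra).
  rewrite (hilbert_B2_params _ _ Hxy), hil_sminus_lerp, hil_splus_lerp by assumption.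
  fold p q. f_equal.
  replace ((p - r) / (s - r) - 1) with (- ((s - p) / (s - r))) by (field; lra).
  replace ((q - r) / (s - r) - 1) with ((q - s) / (s - r)) by (field; lra).
  replace ((p - r) / (s - r)) with (- ((r - p) / (s - r))) by (field; lra).
  rewrite !Rabs_Ropp, !Rabs_pos_eq by (apply Rlt_le, Rdiv_lt_0_compat; lra).
  field. repeat split; lra.
Qed.

Lemma rho_B2_lerp (a b : C) (r s : R) : in_disk (lerp a b r) -> r <= s ->
  rho_B2 (lerp a b r) (lerp a b s)
  = 2 * arcsinh ((s - r) * Cmod (Cminus b a)
                 / (sqrt (1 - Cmod (lerp a b r) ^ 2) * sqrt (1 - Cmod (lerp a b s) ^ 2))).
Proof.
  intros Hr Hrs. unfold in_disk in Hr. pose proof (Cmod_ge_0 (lerp a b r)).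
  unfold rho_B2. rewrite Cmod_Cminus_lerp, Rabs_minus_sym, Rabs_pos_eq, sqrt_mult_alt by nra.
  reflexivity.
Qed.

Definition midpoint_param (a b : C) : R :=
  sqrt (1 - Cmod a ^ 2) / (sqrt (1 - Cmod a ^ 2) + sqrt (1 - Cmod b ^ 2)).

Lemma midpoint_param_eq (a b : C) :
  in_disk a -> in_disk b -> Cmod a <> Cmod b ->
  (- (1 - Cmod a ^ 2) + sqrt ((1 - Cmod a ^ 2) * (1 - Cmod b ^ 2))) / (Cmod a ^ 2 - Cmod b ^ 2)
  = midpoint_param a b.
Proof.
  intros Ha Hb Hmod.
  pose proof (in_disk_defect_pos a Ha). pose proof (in_disk_defect_pos b Hb).
  unfold midpoint_param. rewrite <- sqrt_ratio_param; [f_equal; ring | lra | lra |].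
  intro E. apply Hmod, Rsqr_inj; [apply Cmod_ge_0 | apply Cmod_ge_0 | unfold Rsqr; lra].
Qed.

Section Midpoint.

Variables a b : C.
Hypotheses (Ha : in_disk a) (Hb : in_disk b) (Hab : a <> b).

Let sa := sqrt (1 - Cmod a ^ 2).
Let sb := sqrt (1 - Cmod b ^ 2).
Let p := hil_sminus a b.
Let q := hil_splus a b.
Let t := midpoint_param a b.

Lemma sqrt_defect_pos : 0 < sa /\ 0 < sb.
Proof.
  pose proof (in_disk_defect_pos a Ha). pose proof (in_disk_defect_pos b Hb).
  split; apply sqrt_lt_R0; lra.
Qed.

Lemma midpoint_param_in_unit : 0 < t < 1.
Proof. destruct sqrt_defect_pos. now apply ratio_in_unit. Qed.

Lemma chord_roots_bracket : p < 0 /\ 1 < q.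
Proof.
  split.
  - apply (in_disk_lerp a b 0 Ha Hab). now rewrite lerp_0.
  - apply (in_disk_lerp a b 1 Ha Hab). now rewrite lerp_1.
Qed.

Lemma in_disk_midpoint : in_disk (lerp a b t).
Proof.
  pose proof midpoint_param_in_unit. pose proof chord_roots_bracket.
  apply (in_disk_lerp a b t Ha Hab). fold p q. split; lra.
Qed.

Lemma hilbert_B2_midpoint : hilbert_B2 a (lerp a b t) = hilbert_B2 (lerp a b t) b.
Proof.
  destruct sqrt_defect_pos as [Hsa Hsb]. destruct chord_roots_bracket as [Hp Hq].
  pose proof midpoint_param_in_unit as Ht.
  pose proof (in_disk_defect_pos a Ha). pose proof (in_disk_defect_pos b Hb).
  pose proof (Cmod_lerp_sq_factor a b 0 Ha Hab) as Ea. rewrite lerp_0 in Ea.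
  pose proof (Cmod_lerp_sq_factor a b 1 Ha Hab) as Eb. rewrite lerp_1 in Eb.
  fold p q in Ea, Eb.
  assert (Hfa : sa ^ 2 = - (hil_A a b * p * q)) by (unfold sa; rewrite pow2_sqrt by lra; nra).
  assert (Hfb : sb ^ 2 = hil_A a b * (1 - p) * (q - 1)) by (unfold sb; rewrite pow2_sqrt by lra; nra).
  pose proof (lerp_0 a b) as E0. pose proof (lerp_1 a b) as E1.
  (* Abstracting [lerp a b] lets us rewrite the endpoints a, b as points of the
     chord without touching the chord itself. *)
  set (x := lerp a b) in *. rewrite <- E0, <- E1. unfold x in *.
  rewrite !hilbert_B2_lerp by (assumption || (fold p q; lra)). fold p q. f_equal.
  rewrite Rminus_0_r, Rminus_0_l. now apply chord_cross_ratio_balance with (hil_A a b).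
Qed.

Lemma rho_B2_midpoint : rho_B2 a (lerp a b t) = rho_B2 (lerp a b t) b.
Proof.
  destruct sqrt_defect_pos as [Hsa Hsb]. pose proof midpoint_param_in_unit.
  pose proof in_disk_midpoint as Hc. pose proof (sqrt_lt_R0 _ (in_disk_defect_pos _ Hc)).
  pose proof (lerp_0 a b) as E0. pose proof (lerp_1 a b) as E1.
  set (x := lerp a b) in *. rewrite <- E0, <- E1. unfold x in *.
  rewrite !rho_B2_lerp by (rewrite ?E0; assumption || lra).
  rewrite E0, E1. fold sa sb.
  set (sc := sqrt (1 - Cmod (lerp a b t) ^ 2)) in *.
  do 2 f_equal. unfold t, midpoint_param. fold sa sb. field. repeat split; lra.
Qed.

End Midpoint.

Theorem mainTheorem10 (a b : C) :
  in_disk a -> in_disk b -> a <> b -> Cmod a <> Cmod b ->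
  let t := (- (1 - Cmod a ^ 2) + sqrt ((1 - Cmod a ^ 2) * (1 - Cmod b ^ 2)))
           / (Cmod a ^ 2 - Cmod b ^ 2) in
  let c := Cplus (Cmult (RtoC (1 - t)) a) (Cmult (RtoC t) b) in
  0 < t < 1 /\ hilbert_B2 a c = hilbert_B2 c b /\ rho_B2 a c = rho_B2 c b.
Proof.
  intros Ha Hb Hab Hmod t c.
  assert (Ht : t = midpoint_param a b) by now apply midpoint_param_eq.
  unfold c. rewrite lerp_convex, Ht.
  split; [| split].
  - now apply midpoint_param_in_unit.
  - now apply hilbert_B2_midpoint.
  - now apply rho_B2_midpoint.
Qed.
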